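(* The function $k\mapsto T_1(k)$ is decreasing and the function $k\mapsto T_2(k)$ is increasing on $(k_0,\infty)$.
   Context: $I(u)=\tfrac12u\log u+\tfrac12(1-u)\log(1-u)$ on $[0,1]$ ($0\log0=0$). $k_0$ is the unique solution of $\frac{k_0-1}{k_0}\log(k_0-1)=1$. It is known that for every real $k>k_0$ there is a unique $\hat\theta(k)\geq0$ such that $u\mapsto\hat\theta(k)u^k-I(u)$ has exactly two global maximisers $u_1^*(\hat\theta(k),k)<u_2^*(\hat\theta(k),k)$ on $[0,1]$. Define $T_1(k)=u_1^*(\hat\theta(k),k)^k$ and $T_2(k)=u_2^*(\hat\theta(k),k)^k$. *)

From Stdlib Require Import Reals.
Open Scope R_scope.

Definition xlogx (u : R) : R := if Req_EM_T u 0 then 0 else u * ln u.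

Definition I_fun (u : R) : R := / 2 * xlogx u + / 2 * xlogx (1 - u).

Definition rpow (u k : R) : R := if Rle_dec u 0 then 0 else Rpower u k.

Definition Fth (theta k u : R) : R := theta * rpow u k - I_fun u.

Definition is_gmax (theta k u : R) : Prop :=
  0 <= u <= 1 /\ forall v, 0 <= v <= 1 -> Fth theta k v <= Fth theta k u.

Definition two_gmax (theta k u1 u2 : R) : Prop :=
  u1 < u2 /\ is_gmax theta k u1 /\ is_gmax theta k u2 /\
  forall v, is_gmax theta k v -> v = u1 \/ v = u2.

Definition is_k0 (k0 : R) : Prop := 1 < k0 /\ (k0 - 1) / k0 * ln (k0 - 1) = 1.

From Stdlib Require Import Reals Lra.
From Coquelicot Require Import Coquelicot.
Open Scope R_scope.

(* A global maximiser u of [Fth θ k] lies in (0,1) and satisfies θ = critical_theta k u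
   (= u I'(u) / (k u^k), with 2 I' = logit).  The derivative of critical_theta k has the sign
   of 1 - (k-1) omega, where omega u = (1-u) logit u is unimodal with peak u* = (k0-1)/k0.
   No maximiser lies in a band where (k-1) omega > 1 (F decreases into it from one side), and
   two maximisers cannot both lie where critical_theta k increases.  For k > k0 the band
   contains [u*, u*^(k0/k)], which forces T1(k) < u*^k0 < T2(k).

   For k < k' and a maximiser x of the k'-problem, write x = c^β with β = k/k'.  Then c is a
   strict maximiser on (1/2,1) of the k-problem with parameter critical_theta k c, because
   y |-> I(y^β) - rho(c) I(y) peaks at y = c, rho being the decreasing ratio of the
   derivatives of I(y^β) and I(y).  Comparing with the k-problem at θ shows that x^k' is not
   in [T1(k), T2(k)]; with the separation by u*^k0 this gives T1(k') < T1(k) and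
   T2(k) < T2(k'). *)

Lemma lt_of_derive_pos (f f' : R -> R) (p q : R) : p < q ->
  (forall x, p <= x <= q -> is_derive f x (f' x)) ->
  (forall x, p < x < q -> 0 < f' x) -> f p < f q.
Proof.
  intros Hpq Hd Hpos.
  destruct (MVT_cor2 f f' p q Hpq) as [c [Hc Hcpq]].
  - intros x Hx. now apply is_derive_Reals, Hd.
  - specialize (Hpos c Hcpq). nra.
Qed.

Lemma lt_of_derive_neg (f f' : R -> R) (p q : R) : p < q ->
  (forall x, p <= x <= q -> is_derive f x (f' x)) ->
  (forall x, p < x < q -> f' x < 0) -> f q < f p.
Proof.
  intros Hpq Hd Hneg.
  destruct (MVT_cor2 f f' p q Hpq) as [c [Hc Hcpq]].
  - intros x Hx. now apply is_derive_Reals, Hd.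
  - specialize (Hneg c Hcpq). nra.
Qed.

Lemma derive_eq_0_of_max (f : R -> R) (p q c l : R) : p < c < q ->
  is_derive f c l -> (forall x, p < x < q -> f x <= f c) -> l = 0.
Proof.
  intros Hc Hd Hmax. apply is_derive_Reals in Hd.
  exact (deriv_maximum f p q c (exist _ l Hd) (proj1 Hc) (proj2 Hc)
           (fun x H1 H2 => Hmax x (conj H1 H2))).
Qed.

Lemma locally_unit_interval (u : R) : 0 < u < 1 -> locally u (fun t => 0 < t < 1).
Proof. intros Hu. exact (open_and _ _ (open_gt 0) (open_lt 1) u Hu). Qed.

Lemma ln_gt_1_minus_inv (u : R) : 0 < u -> u <> 1 -> 1 - / u < ln u.
Proof.
  intros Hu H1.
  assert (Hl : - ln u <> 0).
  { intros H0. apply H1, ln_inv; [lra | lra |]. rewrite ln_1. lra. }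
  pose proof (exp_ineq1 _ Hl) as H.
  rewrite exp_Ropp, exp_ln in H by lra. lra.
Qed.

Lemma Rpower_pos (x y : R) : 0 < Rpower x y.
Proof. apply exp_pos. Qed.

Lemma is_derive_Rpower (x y : R) :
  0 < x -> is_derive (fun t => Rpower t y) x (y * Rpower x y / x).
Proof. intros Hx. unfold Rpower. auto_derive; [lra |]. field. lra. Qed.

Lemma Rpower_between (u c : R) : 0 < u < 1 -> 0 < c < 1 -> u < Rpower u c < 1.
Proof.
  intros Hu Hc.
  assert (Hl : ln u < 0) by (rewrite <- ln_1; apply ln_increasing; lra).
  split; apply ln_lt_inv; try lra; try apply Rpower_pos; rewrite ln_Rpower; try rewrite ln_1; nra.
Qed.

Lemma Rpower_le_reg_r (a c k : R) : 0 < k -> 0 < a -> 0 < c ->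
  Rpower a k <= Rpower c k -> a <= c.
Proof.
  intros Hk Ha Hc H. destruct (Rle_or_lt a c) as [Hle | Hlt]; [exact Hle |].
  pose proof (Rlt_Rpower_l c a k Hk (conj Hc Hlt)). lra.
Qed.

Definition logit (u : R) : R := ln u - ln (1 - u).

Lemma logit_lt (p q : R) : 0 < p -> p < q -> q < 1 -> logit p < logit q.
Proof.
  intros. unfold logit.
  assert (ln p < ln q) by (apply ln_increasing; lra).
  assert (ln (1 - q) < ln (1 - p)) by (apply ln_increasing; lra).
  lra.
Qed.

Lemma logit_half : logit (/ 2) = 0.
Proof. unfold logit. replace (1 - / 2) with (/ 2) by field. ring. Qed.

Lemma logit_pos (u : R) : / 2 < u < 1 -> 0 < logit u.
Proof. intros Hu. rewrite <- logit_half. apply logit_lt; lra. Qed.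

Lemma I_fun_interior (u : R) :
  0 < u < 1 -> I_fun u = / 2 * (u * ln u) + / 2 * ((1 - u) * ln (1 - u)).
Proof.
  intros Hu. unfold I_fun, xlogx.
  destruct (Req_EM_T u 0); [lra |]. destruct (Req_EM_T (1 - u) 0); [lra |].
  reflexivity.
Qed.

Lemma is_derive_I_fun (u : R) : 0 < u < 1 -> is_derive I_fun u (/ 2 * logit u).
Proof.
  intros Hu.
  apply (is_derive_ext_loc (fun t => / 2 * (t * ln t) + / 2 * ((1 - t) * ln (1 - t)))).
  - apply (filter_imp (fun t => 0 < t < 1)); [| now apply locally_unit_interval].
    intros t Ht. symmetry. now apply I_fun_interior.
  - auto_derive; [lra |]. replace (1 + - u) with (1 - u) by ring.
    unfold logit. field. lra.
Qed.

Lemma rpow_Rpower (u k : R) : 0 < u -> rpow u k = Rpower u k.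
Proof. intros Hu. unfold rpow. destruct (Rle_dec u 0); [lra | reflexivity]. Qed.

Lemma Fth_Rpower (θ k u : R) : 0 < u -> Fth θ k u = θ * Rpower u k - I_fun u.
Proof. intros Hu. unfold Fth. now rewrite rpow_Rpower. Qed.

Lemma Fth_0 (θ k : R) : Fth θ k 0 = 0.
Proof.
  unfold Fth, rpow, I_fun, xlogx.
  destruct (Rle_dec 0 0); [| lra]. destruct (Req_EM_T 0 0); [| lra].
  destruct (Req_EM_T (1 - 0) 0); [lra |].
  rewrite Rminus_0_r, ln_1. ring.
Qed.

Lemma Fth_1 (θ k : R) : Fth θ k 1 = θ.
Proof.
  unfold Fth, rpow, I_fun, xlogx, Rpower.
  destruct (Rle_dec 1 0); [lra |]. destruct (Req_EM_T 1 0); [lra |].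
  destruct (Req_EM_T (1 - 1) 0); [| lra].
  rewrite ln_1, Rmult_0_r, exp_0. ring.
Qed.

Lemma Fth_half_pos (θ k : R) : 0 <= θ -> 0 < Fth θ k (/ 2).
Proof.
  intros Hθ. rewrite Fth_Rpower, I_fun_interior by lra.
  replace (1 - / 2) with (/ 2) by field.
  rewrite ln_Rinv by lra.
  pose proof ln_lt_2. pose proof (Rpower_pos (/ 2) k).
  assert (0 <= θ * Rpower (/ 2) k) by (apply Rmult_le_pos; lra).
  lra.
Qed.

Lemma Fth_near_1 (θ k : R) : 0 <= θ -> 0 < k -> exists v, 0 < v < 1 /\ θ < Fth θ k v.
Proof.
  intros Hθ Hk.
  (* At v = 1 - eps the gain - eps ln eps / 2 = eps (4θk + 1) / 2 beats the loss
     θ (1 - v^k) <= 2θk eps. *)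
  set (eps := exp (- (4 * θ * k + 1))).
  assert (Hln_eps : ln eps = - (4 * θ * k + 1)) by apply ln_exp.
  assert (Heps : 0 < eps < / 2).
  { split; [apply exp_pos |].
    assert (0 <= θ * k) by (apply Rmult_le_pos; lra).
    assert (Hle : eps <= exp (- (1))).
    { destruct (Rle_lt_or_eq_dec (- (4 * θ * k + 1)) (- (1))) as [Hlt | Heq]; [nra | |].
      - left. now apply exp_increasing.
      - right. unfold eps. now rewrite Heq. }
    assert (exp (- (1)) < / 2).
    { pose proof (exp_ineq1 1 ltac:(lra)).
      rewrite exp_Ropp. apply Rinv_lt_contravar; lra. }
    lra. }
  set (v := 1 - eps).
  exists v. split; [unfold v; lra |].
  rewrite Fth_Rpower, I_fun_interior by (unfold v; lra).
  replace (1 - v) with eps by (unfold v; ring). rewrite Hln_eps.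
  assert (Hv : / 2 < v < 1) by (unfold v; lra).
  assert (Hpow : 1 + k * ln v <= Rpower v k) by apply exp_ineq1_le.
  assert (Hlnv : - (2 * eps) < ln v).
  { pose proof (ln_gt_1_minus_inv v ltac:(lra) ltac:(lra)).
    assert (1 - / v = - (eps / v)) by (unfold v; field; lra).
    assert (eps / v < 2 * eps).
    { apply (Rmult_lt_reg_r v); [lra |]. unfold Rdiv. rewrite Rmult_assoc, Rinv_l by lra. nra. }
    lra. }
  assert (Hlnv0 : ln v < 0) by (rewrite <- ln_1; apply ln_increasing; lra).
  assert (0 <= θ * (Rpower v k - 1 - k * ln v)) by (apply Rmult_le_pos; lra).
  assert (0 <= θ * k * (ln v + 2 * eps)) by (apply Rmult_le_pos; nra).
  nra.
Qed.

(** * Critical points *)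

Definition critical_theta (k u : R) : R := u * logit u / (2 * k * Rpower u k).

Lemma is_derive_Fth (θ k u : R) : 0 < k -> 0 < u < 1 ->
  is_derive (Fth θ k) u (k * Rpower u k / u * (θ - critical_theta k u)).
Proof.
  intros Hk Hu.
  apply (is_derive_ext_loc (fun t => θ * Rpower t k - I_fun t)).
  - apply (filter_imp (fun t => 0 < t < 1)); [| now apply locally_unit_interval].
    intros t Ht. symmetry. apply Fth_Rpower. lra.
  - replace (k * Rpower u k / u * (θ - critical_theta k u))
      with (θ * (k * Rpower u k / u) - / 2 * logit u).
    + apply is_derive_Reals, derivable_pt_lim_minus; apply is_derive_Reals.
      * apply is_derive_scal, is_derive_Rpower. lra.
      * now apply is_derive_I_fun.
    + unfold critical_theta. pose proof (Rpower_pos u k). field. lra.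
Qed.

Lemma gmax_interior (θ k u : R) : 0 <= θ -> 0 < k -> is_gmax θ k u -> 0 < u < 1.
Proof.
  intros Hθ Hk [Hu Hmax]. split.
  - destruct (Req_dec u 0) as [-> | Hu0]; [exfalso | lra].
    pose proof (Hmax (/ 2) ltac:(lra)). pose proof (Fth_half_pos θ k Hθ).
    rewrite Fth_0 in *. lra.
  - destruct (Req_dec u 1) as [-> | Hu1]; [exfalso | lra].
    destruct (Fth_near_1 θ k Hθ Hk) as [v [Hv Hlt]].
    pose proof (Hmax v ltac:(lra)). rewrite Fth_1 in *. lra.
Qed.

Lemma gmax_critical (θ k u : R) : 0 <= θ -> 0 < k -> is_gmax θ k u ->
  0 < u < 1 /\ θ = critical_theta k u.
Proof.
  intros Hθ Hk Hg.
  pose proof (gmax_interior θ k u Hθ Hk Hg) as Hu. split; [exact Hu |].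
  assert (H0 : k * Rpower u k / u * (θ - critical_theta k u) = 0).
  { apply (derive_eq_0_of_max (Fth θ k) 0 1 u); [exact Hu | now apply is_derive_Fth |].
    intros x Hx. apply (proj2 Hg). lra. }
  pose proof (Rpower_pos u k).
  assert (0 < k * Rpower u k / u) by (apply Rdiv_lt_0_compat; nra).
  nra.
Qed.

Lemma logit_pos_inv (u : R) : 0 < u < 1 -> 0 < logit u -> / 2 < u.
Proof.
  intros Hu Hl. destruct (Rlt_or_le (/ 2) u) as [Hlt | Hle]; [exact Hlt | exfalso].
  destruct (Req_dec u (/ 2)) as [-> | Hne]; [rewrite logit_half in Hl; lra |].
  pose proof (logit_lt u (/ 2) ltac:(lra) ltac:(lra) ltac:(lra)).
  rewrite logit_half in *. lra.
Qed.

Lemma two_gmax_range (θ k a b : R) : 0 <= θ -> 0 < k -> two_gmax θ k a b ->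
  / 2 < a /\ a < b /\ b < 1.
Proof.
  intros Hθ Hk [Hab [Ga [Gb _]]].
  destruct (gmax_critical θ k a Hθ Hk Ga) as [Ha Hθa].
  destruct (gmax_critical θ k b Hθ Hk Gb) as [Hb Hθb].
  assert (Hfactor : forall u, 0 < u ->
    critical_theta k u = logit u * (u / (2 * k * Rpower u k)) /\ 0 < u / (2 * k * Rpower u k)).
  { intros u Hu. pose proof (Rpower_pos u k). split.
    - unfold critical_theta. field. lra.
    - apply Rdiv_lt_0_compat; nra. }
  destruct (Hfactor a ltac:(lra)) as [Ea Pa]. destruct (Hfactor b ltac:(lra)) as [Eb Pb].
  pose proof (logit_lt a b (proj1 Ha) Hab (proj2 Hb)).
  assert (0 <= logit a) by nra.
  assert (0 < θ) by nra.
  split; [| lra]. apply logit_pos_inv; [exact Ha |]. nra.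
Qed.

Definition omega (u : R) : R := (1 - u) * logit u.

Lemma is_derive_omega (u : R) : 0 < u < 1 -> is_derive omega u (/ u - logit u).
Proof.
  intros Hu. unfold omega, logit. auto_derive; [lra |].
  replace (1 + - u) with (1 - u) by ring. field. lra.
Qed.

Lemma is_derive_critical_theta (k u : R) : 0 < k -> 0 < u < 1 ->
  is_derive (critical_theta k) u
    ((1 - (k - 1) * omega u) / (2 * k * (1 - u) * Rpower u k)).
Proof.
  intros Hk Hu. pose proof (exp_pos (k * ln u)).
  unfold critical_theta, omega, logit, Rpower. auto_derive.
  - replace (1 + - u) with (1 - u) by ring. repeat split; try lra. nra.
  - replace (1 + - u) with (1 - u) by ring. field. repeat split; lra.
Qed.

Lemma critical_theta_decreasing (k p q : R) : 0 < k -> 0 < p -> p < q -> q < 1 ->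
  (forall x, p < x < q -> 1 < (k - 1) * omega x) -> critical_theta k q < critical_theta k p.
Proof.
  intros Hk Hp Hpq Hq Hom.
  eapply (lt_of_derive_neg (critical_theta k)); [exact Hpq | |].
  { intros x Hx. apply is_derive_critical_theta; lra. }
  intros x Hx. specialize (Hom x Hx). pose proof (Rpower_pos x k).
  apply Rdiv_neg_pos; [lra |]. apply Rmult_lt_0_compat; [nra | lra].
Qed.

Lemma critical_theta_increasing (k p q : R) : 0 < k -> 0 < p -> p < q -> q < 1 ->
  (forall x, p < x < q -> (k - 1) * omega x < 1) -> critical_theta k p < critical_theta k q.
Proof.
  intros Hk Hp Hpq Hq Hom.
  eapply (lt_of_derive_pos (critical_theta k)); [exact Hpq | |].
  { intros x Hx. apply is_derive_critical_theta; lra. }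
  intros x Hx. specialize (Hom x Hx). pose proof (Rpower_pos x k).
  apply Rdiv_lt_0_compat; [lra |]. apply Rmult_lt_0_compat; [nra | lra].
Qed.

Lemma Fth_lt_of_critical_lt (θ k p q : R) : 0 < k -> 0 < p -> p < q -> q < 1 ->
  (forall x, p < x < q -> critical_theta k x < θ) -> Fth θ k p < Fth θ k q.
Proof.
  intros Hk Hp Hpq Hq Hc.
  eapply (lt_of_derive_pos (Fth θ k)); [exact Hpq | intros x Hx; apply is_derive_Fth; lra |].
  intros x Hx. specialize (Hc x Hx). pose proof (Rpower_pos x k).
  apply Rmult_lt_0_compat; [apply Rdiv_lt_0_compat; nra | lra].
Qed.

Lemma Fth_lt_of_critical_gt (θ k p q : R) : 0 < k -> 0 < p -> p < q -> q < 1 ->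
  (forall x, p < x < q -> θ < critical_theta k x) -> Fth θ k q < Fth θ k p.
Proof.
  intros Hk Hp Hpq Hq Hc.
  eapply (lt_of_derive_neg (Fth θ k)); [exact Hpq | intros x Hx; apply is_derive_Fth; lra |].
  intros x Hx. specialize (Hc x Hx). pose proof (Rpower_pos x k).
  apply Rmult_pos_neg; [apply Rdiv_lt_0_compat; nra | lra].
Qed.

Lemma gmax_not_in_band (θ k u p q : R) : 0 <= θ -> 0 < k -> is_gmax θ k u ->
  0 < p -> p < q -> q < 1 -> p <= u <= q ->
  (forall x, p < x < q -> 1 < (k - 1) * omega x) -> False.
Proof.
  intros Hθ Hk Hg Hp Hpq Hq Hu Hband.
  destruct (gmax_critical θ k u Hθ Hk Hg) as [Hu01 Hθu].
  destruct Hg as [_ Hmax].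
  destruct (Rlt_or_le p u) as [Hpu | Hup].
  - assert (Fth θ k u < Fth θ k p).
    { apply Fth_lt_of_critical_gt; try lra.
      intros x Hx. rewrite Hθu. apply critical_theta_decreasing; try lra.
      intros y Hy. apply Hband. lra. }
    pose proof (Hmax p ltac:(lra)). lra.
  - assert (Fth θ k u < Fth θ k q).
    { apply Fth_lt_of_critical_lt; try lra.
      intros x Hx. rewrite Hθu. apply critical_theta_decreasing; try lra.
      intros y Hy. apply Hband. lra. }
    pose proof (Hmax q ltac:(lra)). lra.
Qed.

(** * Separation by ((k0-1)/k0)^k0 *)

Section OmegaPeak.

Variable us : R.
Hypothesis us_range : 0 < us < 1.
Hypothesis logit_us : logit us = / us.

Lemma omega_lt_below_peak (x y : R) : 0 < x -> x < y -> y <= us -> omega x < omega y.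
Proof.
  intros Hx Hxy Hy.
  eapply (lt_of_derive_pos omega); [exact Hxy | intros t Ht; apply is_derive_omega; lra |].
  intros t Ht. assert (logit t < logit us) by (apply logit_lt; lra).
  assert (/ us < / t) by (apply Rinv_lt_contravar; nra). lra.
Qed.

Lemma omega_lt_above_peak (x y : R) : us <= x -> x < y -> y < 1 -> omega y < omega x.
Proof.
  intros Hx Hxy Hy.
  eapply (lt_of_derive_neg omega); [exact Hxy | intros t Ht; apply is_derive_omega; lra |].
  intros t Ht. assert (logit us < logit t) by (apply logit_lt; lra).
  assert (/ t < / us) by (apply Rinv_lt_contravar; nra). lra.
Qed.

End OmegaPeak.

Definition g_ln (u : R) : R := - ln u / (1 - u).

Lemma g_ln_pos (u : R) : 0 < u < 1 -> 0 < g_ln u.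
Proof.
  intros Hu. assert (ln u < 0) by (rewrite <- ln_1; apply ln_increasing; lra).
  apply Rdiv_lt_0_compat; lra.
Qed.

Lemma g_ln_decreasing (p q : R) : 0 < p -> p < q -> q < 1 -> g_ln q < g_ln p.
Proof.
  intros Hp Hpq Hq.
  apply (lt_of_derive_neg g_ln (fun x => (1 - / x - ln x) / (1 - x) ^ 2) p q Hpq).
  - intros x Hx. unfold g_ln. auto_derive; [lra |].
    replace (1 + - x) with (1 - x) by ring. field. lra.
  - intros x Hx. pose proof (ln_gt_1_minus_inv x ltac:(lra) ltac:(lra)).
    apply Rdiv_neg_pos; [lra |]. apply pow_lt. lra.
Qed.

Lemma omega_Rpower_gt (u c : R) : / 2 < u < 1 -> 0 < c < 1 -> c * omega u < omega (Rpower u c).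
Proof.
  intros Hu Hc. set (U := Rpower u c).
  pose proof (Rpower_between u c ltac:(lra) Hc) as HU. fold U in HU.
  assert (Hl : ln u < 0) by (rewrite <- ln_1; apply ln_increasing; lra).
  assert (HlU : ln U = c * ln u) by apply ln_Rpower.
  assert (Homega : forall v, 0 < v < 1 -> omega v = logit v * - ln v / g_ln v).
  { intros v Hv. unfold omega, g_ln.
    assert (ln v < 0) by (rewrite <- ln_1; apply ln_increasing; lra).
    field. lra. }
  assert (HL : logit u < logit U) by (apply logit_lt; lra).
  assert (HL0 : 0 < logit u) by (apply logit_pos; lra).
  assert (Hg : g_ln U < g_ln u) by (apply g_ln_decreasing; lra).
  assert (Hg0 : 0 < g_ln U) by (apply g_ln_pos; lra).
  assert (Hratio : logit u / g_ln u < logit U / g_ln U).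
  { apply (Rlt_trans _ (logit u / g_ln U)).
    - apply Rmult_lt_compat_l; [lra |]. apply Rinv_lt_contravar; nra.
    - apply Rmult_lt_compat_r; [apply Rinv_0_lt_compat |]; lra. }
  rewrite (Homega u), (Homega U), HlU by lra.
  replace (c * (logit u * - ln u / g_ln u)) with (c * - ln u * (logit u / g_ln u)) by (field; lra).
  replace (logit U * - (c * ln u) / g_ln U) with (c * - ln u * (logit U / g_ln U)) by (field; lra).
  apply Rmult_lt_compat_l; nra.
Qed.

Lemma ln_k0 (k0 : R) : is_k0 k0 -> ln (k0 - 1) = k0 / (k0 - 1).
Proof.
  intros [Hk1 Hk]. apply (Rmult_eq_reg_l ((k0 - 1) / k0)).
  - rewrite Hk. field. lra.
  - apply Rgt_not_eq, Rdiv_lt_0_compat; lra.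
Qed.

Lemma k0_gt_2 (k0 : R) : is_k0 k0 -> 2 < k0.
Proof.
  intros Hk0. pose proof (ln_k0 k0 Hk0) as Hl. destruct Hk0 as [Hk1 _].
  destruct (Rlt_or_le 2 k0) as [Hlt | Hle]; [exact Hlt | exfalso].
  assert (ln (k0 - 1) <= 0).
  { rewrite <- ln_1. apply ln_le; lra. }
  assert (0 < k0 / (k0 - 1)) by (apply Rdiv_lt_0_compat; lra).
  lra.
Qed.

Lemma logit_k0 (k0 : R) : is_k0 k0 -> logit ((k0 - 1) / k0) = k0 / (k0 - 1).
Proof.
  intros Hk0. pose proof (k0_gt_2 k0 Hk0). rewrite <- (ln_k0 k0 Hk0).
  unfold logit. replace (1 - (k0 - 1) / k0) with (/ k0) by (field; lra).
  unfold Rdiv. rewrite ln_mult, !ln_Rinv by (try apply Rinv_0_lt_compat; lra). ring.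
Qed.

Section Separation.

Variables (k θ a b us vs : R).
Hypothesis k_gt_1 : 1 < k.
Hypothesis θ_ge_0 : 0 <= θ.
Hypothesis gmax_ab : two_gmax θ k a b.
Hypothesis us_pos : 0 < us.
Hypothesis us_lt_vs : us < vs.
Hypothesis vs_lt_1 : vs < 1.
Hypothesis logit_us : logit us = / us.
Hypothesis omega_vs : 1 < (k - 1) * omega vs.

Let band_free (u : R) : is_gmax θ k u -> us <= u <= vs -> False.
Proof.
  intros Hg Hu. apply (gmax_not_in_band θ k u us vs θ_ge_0 ltac:(lra) Hg); try lra.
  intros x Hx. assert (omega vs < omega x) by (apply (omega_lt_above_peak us); lra).
  nra.
Qed.

Let critical_not_increasing : ~ (forall x, a < x < b -> (k - 1) * omega x < 1).
Proof.
  intros Hinc. destruct gmax_ab as [Hab [Ga [Gb _]]].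
  destruct (gmax_critical θ k a θ_ge_0 ltac:(lra) Ga) as [Ha Hθa].
  destruct (gmax_critical θ k b θ_ge_0 ltac:(lra) Gb) as [Hb Hθb].
  pose proof (critical_theta_increasing k a b ltac:(lra) ltac:(lra) Hab ltac:(lra) Hinc).
  lra.
Qed.

Lemma two_gmax_upper_gt : vs < b.
Proof.
  pose proof gmax_ab as [Hab [Ga [Gb _]]].
  destruct (gmax_interior θ k a θ_ge_0 ltac:(lra) Ga) as [Ha _].
  destruct (Rlt_or_le vs b) as [Hlt | Hle]; [exact Hlt | exfalso].
  destruct (Rlt_or_le b us) as [Hbus | Husb]; [| now apply (band_free b)].
  destruct (Rlt_or_le ((k - 1) * omega b) 1) as [Hwb | Hwb].
  - apply critical_not_increasing. intros x Hx.
    assert (omega x < omega b) by (apply (omega_lt_below_peak us); lra). nra.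
  - apply (gmax_not_in_band θ k b b us θ_ge_0 ltac:(lra) Gb); try lra.
    intros x Hx. assert (omega b < omega x) by (apply (omega_lt_below_peak us); lra). nra.
Qed.

Lemma two_gmax_lower_lt : a < us.
Proof.
  pose proof gmax_ab as [Hab [Ga [Gb _]]].
  destruct (gmax_interior θ k b θ_ge_0 ltac:(lra) Gb) as [_ Hb].
  destruct (Rlt_or_le a us) as [Hlt | Hle]; [exact Hlt | exfalso].
  destruct (Rlt_or_le vs a) as [Hvsa | Havs]; [| now apply (band_free a)].
  destruct (Rlt_or_le ((k - 1) * omega a) 1) as [Hwa | Hwa].
  - apply critical_not_increasing. intros x Hx.
    assert (omega x < omega a) by (apply (omega_lt_above_peak us); lra). nra.
  - apply (gmax_not_in_band θ k a us a θ_ge_0 ltac:(lra) Ga); try lra.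
    intros x Hx. assert (omega a < omega x) by (apply (omega_lt_above_peak us); lra). nra.
Qed.

End Separation.

Lemma two_gmax_separated (k0 k θ a b : R) : is_k0 k0 -> k0 < k -> 0 <= θ ->
  two_gmax θ k a b -> rpow a k < Rpower ((k0 - 1) / k0) k0 < rpow b k.
Proof.
  intros Hk0 Hk Hθ Hab.
  pose proof (k0_gt_2 k0 Hk0) as Hk02.
  set (us := (k0 - 1) / k0).
  set (vs := Rpower us (k0 / k)).
  assert (Hus : / 2 < us < 1).
  { unfold us. split; apply (Rmult_lt_reg_r k0); try lra; field_simplify; lra. }
  assert (Hlogit_us : logit us = / us).
  { unfold us. rewrite logit_k0 by exact Hk0. field. lra. }
  assert (Hc : 0 < k0 / k < 1).
  { split; [apply Rdiv_lt_0_compat | apply (Rmult_lt_reg_r k); [| field_simplify]]; lra. }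
  assert (Hvs : us < vs < 1) by (apply Rpower_between; lra).
  assert (Hvs_k : Rpower vs k = Rpower us k0).
  { unfold vs. rewrite Rpower_mult. f_equal. field. lra. }
  assert (Homega_vs : 1 < (k - 1) * omega vs).
  { pose proof (omega_Rpower_gt us (k0 / k) Hus Hc) as Hgt. fold vs in Hgt.
    assert (Homega_us : omega us = / (k0 - 1)).
    { unfold omega. rewrite Hlogit_us. unfold us. field. lra. }
    rewrite Homega_us in Hgt.
    assert (1 <= (k - 1) * (k0 / k * / (k0 - 1))).
    { apply (Rmult_le_reg_r (k * (k0 - 1))); [nra |]. field_simplify; nra. }
    nra. }
  destruct (two_gmax_range θ k a b Hθ ltac:(lra) Hab) as [Ha [_ _]].
  pose proof (two_gmax_upper_gt k θ a b us vs ltac:(lra) Hθ Hab ltac:(lra) ltac:(lra) ltac:(lra)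
               Hlogit_us Homega_vs).
  pose proof (two_gmax_lower_lt k θ a b us vs ltac:(lra) Hθ Hab ltac:(lra) ltac:(lra) ltac:(lra)
               Hlogit_us Homega_vs).
  rewrite !rpow_Rpower, <- Hvs_k by lra.
  split; apply Rlt_Rpower_l; lra.
Qed.

(** * Comparison of two exponents *)

Definition chi (u : R) : R := 1 + / ((1 - u) * logit u).

Definition Phi (u : R) : R := - ln u * chi u.

Lemma Phi_decreasing (x y : R) : / 2 < x -> x < y -> y < 1 -> Phi y < Phi x.
Proof.
  intros Hx Hxy Hy.
  assert (HPhi : forall u, / 2 < u < 1 -> Phi u = - ln u + g_ln u / logit u).
  { intros u Hu. unfold Phi, chi, g_ln. pose proof (logit_pos u Hu). field. lra. }
  rewrite (HPhi x), (HPhi y) by lra.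
  assert (ln x < ln y) by (apply ln_increasing; lra).
  assert (g_ln y < g_ln x) by (apply g_ln_decreasing; lra).
  assert (0 < g_ln y) by (apply g_ln_pos; lra).
  assert (logit x < logit y) by (apply logit_lt; lra).
  assert (0 < logit x) by (apply logit_pos; lra).
  assert (g_ln y / logit y < g_ln x / logit x).
  { apply (Rlt_trans _ (g_ln x / logit y)).
    - apply Rmult_lt_compat_r; [apply Rinv_0_lt_compat |]; lra.
    - apply Rmult_lt_compat_l; [lra |]. apply Rinv_lt_contravar; nra. }
  lra.
Qed.

(* The ratio of the derivatives of [y |-> I_fun (y^β)] and [I_fun] at x. *)
Definition rho (β x : R) : R := β * (Rpower x β * logit (Rpower x β)) / (x * logit x).

Lemma rho_pos (β x : R) : 0 < β < 1 -> / 2 < x < 1 -> 0 < rho β x.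
Proof.
  intros Hβ Hx. pose proof (Rpower_between x β ltac:(lra) Hβ).
  pose proof (logit_pos x Hx). pose proof (logit_pos (Rpower x β) ltac:(lra)).
  unfold rho. apply Rdiv_lt_0_compat; [| nra].
  apply Rmult_lt_0_compat; [lra |]. nra.
Qed.

Lemma is_derive_rho (β x : R) : 0 < β < 1 -> / 2 < x < 1 ->
  is_derive (rho β) x (rho β x * ((β * chi (Rpower x β) - chi x) / x)).
Proof.
  intros Hβ Hx. pose proof (Rpower_between x β ltac:(lra) Hβ) as HU.
  pose proof (logit_pos x Hx). pose proof (logit_pos (Rpower x β) ltac:(lra)).
  unfold rho, chi, logit, Rpower in *.
  auto_derive.
  - replace (1 + - x) with (1 - x) by ring.
    replace (1 + - exp (β * ln x)) with (1 - exp (β * ln x)) by ring.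
    repeat split; try lra. apply Rgt_not_eq. nra.
  - replace (1 + - x) with (1 - x) by ring.
    replace (1 + - exp (β * ln x)) with (1 - exp (β * ln x)) by ring.
    field. repeat split; try lra.
Qed.

Lemma rho_decreasing (β p q : R) : 0 < β < 1 -> / 2 < p -> p < q -> q < 1 ->
  rho β q < rho β p.
Proof.
  intros Hβ Hp Hpq Hq.
  eapply (lt_of_derive_neg (rho β)); [exact Hpq | intros x Hx; apply is_derive_rho; lra |].
  intros x Hx. pose proof (rho_pos β x Hβ ltac:(lra)).
  pose proof (Rpower_between x β ltac:(lra) Hβ) as HU.
  assert (Hlx : ln x < 0) by (rewrite <- ln_1; apply ln_increasing; lra).
  assert (Hchi : β * chi (Rpower x β) < chi x).
  { (* (- ln x) (β chi (x^β) - chi x) = Phi (x^β) - Phi x *)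
    pose proof (Phi_decreasing x (Rpower x β) ltac:(lra) ltac:(lra) ltac:(lra)) as HPhi.
    unfold Phi in HPhi. rewrite ln_Rpower in HPhi.
    apply (Rmult_lt_reg_l (- ln x)); nra. }
  apply Rmult_pos_neg; [lra |]. apply Rdiv_neg_pos; lra.
Qed.

Lemma I_fun_rescaled_lt (β c y : R) : 0 < β < 1 -> / 2 < c < 1 -> / 2 < y < 1 -> y <> c ->
  I_fun (Rpower y β) - rho β c * I_fun y < I_fun (Rpower c β) - rho β c * I_fun c.
Proof.
  intros Hβ Hc Hy Hyc.
  set (h := fun t => I_fun (Rpower t β) - rho β c * I_fun t).
  assert (Hh : forall t, / 2 < t < 1 ->
    is_derive h t (/ 2 * logit t * (rho β t - rho β c))).
  { intros t Ht. pose proof (Rpower_between t β ltac:(lra) Hβ).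
    replace (/ 2 * logit t * (rho β t - rho β c))
      with (β * Rpower t β / t * (/ 2 * logit (Rpower t β)) - rho β c * (/ 2 * logit t)).
    - apply is_derive_Reals, derivable_pt_lim_minus; apply is_derive_Reals.
      + apply (is_derive_comp I_fun (fun t => Rpower t β)).
        * apply is_derive_I_fun. lra.
        * apply is_derive_Rpower. lra.
      + apply is_derive_scal, is_derive_I_fun. lra.
    - pose proof (logit_pos t Ht). pose proof (logit_pos c Hc).
      unfold rho. field. repeat split; lra. }
  assert (Hsign : forall t, / 2 < t < 1 -> 0 < / 2 * logit t).
  { intros t Ht. pose proof (logit_pos t Ht). lra. }
  change (h y < h c).
  destruct (Rlt_or_le y c) as [Hlt | Hle].
  - apply (lt_of_derive_pos h (fun t => / 2 * logit t * (rho β t - rho β c)) y c Hlt);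
      [intros t Ht; apply Hh; lra |].
    intros t Ht. apply Rmult_lt_0_compat; [apply Hsign; lra |].
    assert (rho β c < rho β t) by (apply rho_decreasing; lra). lra.
  - apply (lt_of_derive_neg h (fun t => / 2 * logit t * (rho β t - rho β c)) c y ltac:(lra));
      [intros t Ht; apply Hh; lra |].
    intros t Ht. apply Rmult_pos_neg; [apply Hsign; lra |].
    assert (rho β t < rho β c) by (apply rho_decreasing; lra). lra.
Qed.

Lemma gmax_rescaled_strict (θ' k k' c : R) : 0 <= θ' -> 1 < k -> k < k' ->
  / 2 < c < 1 -> is_gmax θ' k' (Rpower c (k / k')) ->
  forall y, / 2 < y < 1 -> y <> c ->
  Fth (critical_theta k c) k y < Fth (critical_theta k c) k c.
Proof.
  intros Hθ' Hk Hkk' Hc Hg y Hy Hyc.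
  set (β := k / k') in *.
  assert (Hβ : 0 < β < 1).
  { unfold β. split; [apply Rdiv_lt_0_compat; lra |].
    apply (Rmult_lt_reg_r k'); [lra |]. field_simplify; lra. }
  assert (Hpow : forall t, Rpower (Rpower t β) k' = Rpower t k).
  { intros t. rewrite Rpower_mult. f_equal. unfold β. field. lra. }
  destruct (gmax_critical θ' k' (Rpower c β) Hθ' ltac:(lra) Hg) as [Hx Hθ'x].
  assert (Hθ'rho : θ' = rho β c * critical_theta k c).
  { rewrite Hθ'x. unfold critical_theta, rho. rewrite Hpow.
    pose proof (logit_pos c Hc). pose proof (Rpower_pos c k).
    unfold β. field. repeat split; lra. }
  pose proof (proj2 Hg (Rpower y β)) as Hmax.
  pose proof (Rpower_between y β ltac:(lra) Hβ).
  rewrite !Fth_Rpower, !Hpow in Hmax by lra.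
  specialize (Hmax ltac:(lra)).
  pose proof (I_fun_rescaled_lt β c y Hβ Hc Hy Hyc) as Hrescaled.
  apply (Rmult_lt_reg_l (rho β c)); [now apply rho_pos |].
  rewrite !Fth_Rpower by lra.
  replace (rho β c * (critical_theta k c * Rpower y k - I_fun y))
    with (θ' * Rpower y k - rho β c * I_fun y) by (rewrite Hθ'rho; ring).
  replace (rho β c * (critical_theta k c * Rpower c k - I_fun c))
    with (θ' * Rpower c k - rho β c * I_fun c) by (rewrite Hθ'rho; ring).
  lra.
Qed.

Lemma two_gmax_between_not_strict_max (θ k a b c : R) : 0 < k -> 0 <= θ ->
  two_gmax θ k a b -> a <= c <= b ->
  (forall y, / 2 < y < 1 -> y <> c ->
     Fth (critical_theta k c) k y < Fth (critical_theta k c) k c) -> False.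
Proof.
  intros Hk Hθ Hab Hc Hstrict.
  destruct (two_gmax_range θ k a b Hθ Hk Hab) as [Ha [Hlt Hb]].
  destruct Hab as [_ [Ga [Gb _]]].
  destruct (gmax_critical θ k a Hθ Hk Ga) as [_ Hθa].
  destruct (gmax_critical θ k b Hθ Hk Gb) as [_ Hθb].
  set (s := critical_theta k c) in *.
  assert (Fab : Fth θ k a = Fth θ k b).
  { apply Rle_antisym; [apply (proj2 Gb) | apply (proj2 Ga)]; lra. }
  destruct (Req_dec c a) as [Hca | Hca]; [| destruct (Req_dec c b) as [Hcb | Hcb]].
  - assert (Hs : s = θ) by (unfold s; rewrite Hca; now symmetry).
    pose proof (Hstrict b ltac:(lra) ltac:(lra)) as H. rewrite Hs, Hca in H. lra.
  - assert (Hs : s = θ) by (unfold s; rewrite Hcb; now symmetry).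
    pose proof (Hstrict a ltac:(lra) ltac:(lra)) as H. rewrite Hs, Hcb in H. lra.
  - pose proof (Hstrict a ltac:(lra) ltac:(lra)) as Hsa.
    pose proof (Hstrict b ltac:(lra) ltac:(lra)) as Hsb.
    pose proof (proj2 Ga c ltac:(lra)) as Hθc.
    assert (Rpower a k < Rpower c k) by (apply Rlt_Rpower_l; lra).
    assert (Rpower c k < Rpower b k) by (apply Rlt_Rpower_l; lra).
    rewrite !Fth_Rpower in Fab, Hsa, Hsb, Hθc by lra.
    nra.
Qed.

Lemma gmax_rpow_not_between (θ θ' k k' a b x : R) : 1 < k -> k < k' ->
  0 <= θ -> two_gmax θ k a b -> 0 <= θ' -> is_gmax θ' k' x ->
  ~ (rpow a k <= rpow x k' <= rpow b k).
Proof.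
  intros Hk Hkk' Hθ Hab Hθ' Hx [Hxa Hxb].
  destruct (two_gmax_range θ k a b Hθ ltac:(lra) Hab) as [Ha [Hlt Hb]].
  destruct (gmax_interior θ' k' x Hθ' ltac:(lra) Hx) as [Hx0 Hx1].
  set (c := Rpower x (k' / k)).
  assert (Hck : Rpower c k = Rpower x k').
  { unfold c. rewrite Rpower_mult. f_equal. field. lra. }
  assert (Hxc : Rpower c (k / k') = x).
  { unfold c. rewrite Rpower_mult. replace (k' / k * (k / k')) with 1 by (field; lra).
    now apply Rpower_1. }
  rewrite !rpow_Rpower, <- Hck in Hxa, Hxb by lra.
  assert (Hac : a <= c) by (apply (Rpower_le_reg_r a c k); try apply Rpower_pos; lra).
  assert (Hcb : c <= b) by (apply (Rpower_le_reg_r c b k); try apply Rpower_pos; lra).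
  rewrite <- Hxc in Hx.
  apply (two_gmax_between_not_strict_max θ k a b c ltac:(lra) Hθ Hab (conj Hac Hcb)).
  exact (gmax_rescaled_strict θ' k k' c Hθ' Hk Hkk' ltac:(lra) Hx).
Qed.

Theorem lemma3p2 :
  forall k0 : R, is_k0 k0 ->
  forall k k' theta theta' u1 u2 u1' u2' : R,
    k0 < k -> k < k' ->
    0 <= theta -> two_gmax theta k u1 u2 ->
    0 <= theta' -> two_gmax theta' k' u1' u2' ->
    rpow u1' k' < rpow u1 k /\ rpow u2 k < rpow u2' k'.
Proof.
  intros k0 Hk0 k k' θ θ' u1 u2 u1' u2' Hk Hkk' Hθ Hgmax Hθ' Hgmax'.
  assert (Hk1 : 1 < k) by (pose proof (k0_gt_2 k0 Hk0); lra).
  destruct (two_gmax_separated k0 k θ u1 u2 Hk0 Hk Hθ Hgmax) as [S1 S2].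
  destruct (two_gmax_separated k0 k' θ' u1' u2' Hk0 ltac:(lra) Hθ' Hgmax') as [S1' S2'].
  destruct Hgmax' as [_ [G1' [G2' _]]].
  pose proof (gmax_rpow_not_between θ θ' k k' u1 u2 u1' Hk1 Hkk' Hθ Hgmax Hθ' G1') as N1.
  pose proof (gmax_rpow_not_between θ θ' k k' u1 u2 u2' Hk1 Hkk' Hθ Hgmax Hθ' G2') as N2.
  split.
  - destruct (Rlt_or_le (rpow u1' k') (rpow u1 k)) as [H | H]; [exact H |].
    exfalso. apply N1. lra.
  - destruct (Rlt_or_le (rpow u2 k) (rpow u2' k')) as [H | H]; [exact H |].
    exfalso. apply N2. lra.
Qed.
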